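(* Let $IS\in\{\Box,\blacksquare\}$ and let $\tau$ be a correct compositional translation from $\mathrm{SYNCSIMPLE}$ into $\mathrm{LOCKSIMPLE}_{1,IS}$. Then each of the words $\tau(!)$ and $\tau(?)$ either starts with $P_1$ or contains the factor $P_1P_1$ (two consecutive occurrences of $P_1$).
   Context: $\mathrm{SYNCSIMPLE}$: subprocesses $\mathcal{U} ::= \checkmark \mid 0 \mid\, !\mathcal{U} \mid\, ?\mathcal{U}$; processes are finite parallel compositions ($\mid$ associative, commutative, $0$ a unit). Reduction: $!\mathcal{U}_1\mid ?\mathcal{U}_2\mid \mathcal{P}\to \mathcal{U}_1\mid\mathcal{U}_2\mid\mathcal{P}$. Successful: of form $\checkmark\mid\mathcal{P}$; may-convergent: reduces to a successful process; must-convergent: every reachable process is may-convergent. $\mathrm{LOCKSIMPLE}_{k,IS}$ ($IS\in\{\Box,\blacksquare\}^k$, $\Box$ empty, $\blacksquare$ full): subprocesses are words over $\{P_1,T_1,\dots,P_k,T_k\}$ followed by $0$ or $\checkmark$; states $(\mathcal{P},C)$ reduce by $(P_i\mathcal{U}\mid\mathcal{P},C)\to(\mathcal{U}\mid\mathcal{P},C[C_i:=\blacksquare])$ only if $C_i=\Box$, and $(T_i\mathcal{U}\mid\mathcal{P},C)\to(\mathcal{U}\mid\mathcal{P},C[C_i:=\Box])$ always. Success = process contains $\checkmark$; a process $\mathcal{P}$ is may/must-convergent iff the state $(\mathcal{P},IS)$ is. A compositional translation $\tau$ is given by words $\tau(!),\tau(?)$ with $\tau(0)=0$, $\tau(\checkmark)=\checkmark$,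 $\tau(!\mathcal{U})=\tau(!)\tau(\mathcal{U})$, $\tau(?\mathcal{U})=\tau(?)\tau(\mathcal{U})$, $\tau$ commuting with $\mid$; correct = preserves and reflects may- and must-convergence. *)

From mathcomp Require Import all_boot.
From Stdlib Require Import Permutation Relations.
Set Implicit Arguments. Unset Strict Implicit. Unset Printing Implicit Defensive.

Inductive ssub : Type :=
  | SCheck : ssub
  | SZero : ssub
  | SSend : ssub -> ssub
  | SRecv : ssub -> ssub.

(* A process is a finite parallel composition, represented as a list of
   subprocesses; | is associative/commutative (steps are taken up to
   permutation), and the empty list is 0. *)
Definition sproc := seq ssub.

Definition sstep (P P' : sproc) : Prop :=
  exists U1 U2 rest,
    Permutation P (SSend U1 :: SRecv U2 :: rest) /\ P' = U1 :: U2 :: rest.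

Definition sreach := clos_refl_trans sproc sstep.

Definition ssuccessful (P : sproc) : Prop := List.In SCheck P.

Definition smay (P : sproc) : Prop := exists P', sreach P P' /\ ssuccessful P'.
Definition smust (P : sproc) : Prop := forall P', sreach P P' -> smay P'.

Inductive lact (k : nat) : Type :=
  | LP : 'I_k -> lact k
  | LT : 'I_k -> lact k.

(* a subprocess: a word over {P_i,T_i} followed by 0 (false) or check (true) *)
Definition lsub (k : nat) := (seq (lact k) * bool)%type.
Definition lproc (k : nat) := seq (lsub k).
(* lock store: true = full (black square), false = empty (white square) *)
Definition lstore (k : nat) := {ffun 'I_k -> bool}.
Definition lstate (k : nat) := (lproc k * lstore k)%type.

Definition setlock k (C : lstore k) (i : 'I_k) (b : bool) : lstore k :=
  [ffun j => if j == i then b else C j].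

Definition lstep k (S S' : lstate k) : Prop :=
  exists a w b rest,
    Permutation S.1 ((a :: w, b) :: rest) /\ S'.1 = (w, b) :: rest /\
    match a with
    | LP i => S.2 i = false /\ S'.2 = setlock S.2 i true
    | LT i => S'.2 = setlock S.2 i false
    end.

Definition lreach k := clos_refl_trans (lstate k) (@lstep k).

Definition lsuccessful k (S : lstate k) : Prop := List.In ([::], true) S.1.

Definition lmay k (S : lstate k) : Prop := exists S', lreach S S' /\ lsuccessful S'.
Definition lmust k (S : lstate k) : Prop := forall S', lreach S S' -> lmay S'.

Fixpoint tr_sub k (wS wR : seq (lact k)) (U : ssub) : lsub k :=
  match U with
  | SCheck => ([::], true)
  | SZero => ([::], false)
  | SSend U' => let: (w, b) := tr_sub wS wR U' in (wS ++ w, b)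
  | SRecv U' => let: (w, b) := tr_sub wS wR U' in (wR ++ w, b)
  end.

Definition tr_proc k (wS wR : seq (lact k)) (P : sproc) : lproc k :=
  map (tr_sub wS wR) P.

Definition correct_translation k (IS : lstore k) (wS wR : seq (lact k)) : Prop :=
  forall P : sproc,
    (smay P <-> lmay (tr_proc wS wR P, IS)) /\
    (smust P <-> lmust (tr_proc wS wR P, IS)).

Definition starts_P_or_PP k (i : 'I_k) (w : seq (lact k)) : Prop :=
  (exists v, w = LP i :: v) \/ (exists u v, w = u ++ LP i :: LP i :: v).

From Stdlib Require Import Permutation Relations Classical.
From mathcomp Require Import all_boot.

Set Implicit Arguments.
Unset Strict Implicit.
Unset Printing Implicit Defensive.

(* A lone [!✓] or [?✓] has no partner to synchronise with, so it is not
   may-convergent; by correctness neither is the lone word [τ(!)✓] (resp.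
   [τ(?)✓]) started from the store [IS].  Running alone, a word only blocks at
   a [P_1] finding the lock full.  With a single lock this happens either at
   the first letter (when [IS] is full) or right after another [P_1], since a
   [T_1] always empties the lock. *)

Fixpoint runs_alone k (C : lstore k) (w : seq (lact k)) : bool :=
  match w with
  | [::] => true
  | LP i :: w' => ~~ C i && runs_alone (setlock C i true) w'
  | LT i :: w' => runs_alone (setlock C i false) w'
  end.

Lemma runs_alone_lreach k (C : lstore k) w b rest :
  runs_alone C w ->
  exists C', lreach ((w, b) :: rest, C) (([::], b) :: rest, C').
Proof.
elim: w C => [|[] i w IHw] C /=; first by exists C; apply: rt_refl.
- case/andP=> /negbTE Ci_empty /IHw[C' reach_end].
  exists C'; apply: rt_trans reach_end; apply: rt_step.
  by exists (LP i), w, b, rest.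
- move=> /IHw[C' reach_end].
  exists C'; apply: rt_trans reach_end; apply: rt_step.
  by exists (LT i), w, b, rest.
Qed.

Lemma runs_alone_lmay k (C : lstore k) w :
  runs_alone C w -> lmay ([:: (w, true)], C).
Proof.
move=> /(@runs_alone_lreach _ _ _ true [::])[C' reach_end].
by exists ([:: ([::], true)], C'); split => //; left.
Qed.

Lemma runs_alone_one_lock (C : lstore 1) (w : seq (lact 1)) :
  ~ (exists u v, w = u ++ LP ord0 :: LP ord0 :: v) ->
  (C ord0 -> ~ exists v, w = LP ord0 :: v) ->
  runs_alone C w.
Proof.
elim: w C => [//|[] i w IHw] C; rewrite (ord1 i) /= => noPP head_ok.
- apply/andP; split.
    by apply/negP => /head_ok no_head; apply: no_head; exists w.
  apply: IHw => [[u [v def_w]]|_ [v def_w]]; apply: noPP.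
    by exists (LP ord0 :: u), v; rewrite def_w.
  by exists [::], v; rewrite def_w.
- apply: IHw => [[u [v def_w]]|]; last by rewrite /setlock ffunE.
  by apply: noPP; exists (LT ord0 :: u), v; rewrite def_w.
Qed.

Lemma sreach_lone (U : ssub) (P : sproc) : sreach [:: U] P -> P = [:: U].
Proof.
suff lone_inv P0 : sreach P0 P -> P0 = [:: U] -> P = [:: U] by move/lone_inv; apply.
elim=> // [P1 P2 [U1 [U2 [rest [perm _]]]] def_P1 | P1 P2 P3 _ IH12 _ IH23].
  by move: (Permutation_length perm); rewrite def_P1.
by move=> /IH12 /IH23.
Qed.

Lemma smay_lone (U : ssub) : smay [:: U] -> U = SCheck.
Proof. by move=> [P [/sreach_lone -> [|[]]]]. Qed.

Lemma correct_translation_blocks k (IS : lstore k) wS wR :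
  correct_translation IS wS wR -> ~ runs_alone IS wS /\ ~ runs_alone IS wR.
Proof.
move=> correct; split=> /runs_alone_lmay lmay_w.
- have [[_ reflect_may] _] := correct [:: SSend SCheck].
  have /smay_lone// : smay [:: SSend SCheck].
  by apply: reflect_may; rewrite /tr_proc /= cats0.
- have [[_ reflect_may] _] := correct [:: SRecv SCheck].
  have /smay_lone// : smay [:: SRecv SCheck].
  by apply: reflect_may; rewrite /tr_proc /= cats0.
Qed.

Lemma starts_P_or_PP_of_blocked (IS : lstore 1) w :
  ~ runs_alone IS w -> starts_P_or_PP ord0 w.
Proof.
move=> blocked; apply: NNPP => no_P_PP; apply: blocked.
by apply: runs_alone_one_lock => [PP|_ P_head]; apply: no_P_PP; [right | left].
Qed.

Theorem lemma3p1 (IS : {ffun 'I_1 -> bool}) (wS wR : seq (lact 1)) :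
  correct_translation IS wS wR ->
  starts_P_or_PP ord0 wS /\ starts_P_or_PP ord0 wR.
Proof.
move=> /correct_translation_blocks[blockedS blockedR].
by split; [exact: starts_P_or_PP_of_blocked blockedS
          | exact: starts_P_or_PP_of_blocked blockedR].
Qed.
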